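(* There exists a $3$-subset-regular, $5$-uniform, intersecting family $\mathcal{F}\subseteq\binom{[11]}{5}$ with $$|\mathcal{F}|=66=\frac{\binom{11}{5}}{1+\binom{6}{5}\big/\binom{1}{0}},$$ i.e. attaining equality in the bound $|\mathcal{F}|\leq \binom{n}{k}\Big/\Big(1+\binom{n-k}{k}\big/\binom{n-k-s-2}{k-s-2}\Big)$ for $(n,k,s)=(11,5,3)$.
   Context: A family $\mathcal{F}\subseteq 2^{[n]}$ is $s$-subset-regular if every $s$-element subset of $[n]$ is contained in the same number of members of $\mathcal{F}$. A family is $k$-uniform if all members have size $k$, and intersecting if any two members have nonempty intersection. *)

From mathcomp Require Import all_boot.
Set Implicit Arguments. Unset Strict Implicit. Unset Printing Implicit Defensive.

Definition subset_regular (n s : nat) (F : {set {set 'I_n}}) : Prop :=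
  exists c : nat, forall S : {set 'I_n}, #|S| = s ->
    #|[set A in F | S \subset A]| = c.

Definition uniform (n k : nat) (F : {set {set 'I_n}}) : Prop :=
  forall A, A \in F -> #|A| = k.

Definition intersecting (n : nat) (F : {set {set 'I_n}}) : Prop :=
  forall A B, A \in F -> B \in F -> A :&: B != set0.

(* The family is the Steiner system S(4,5,11), obtained by translating six base
   blocks around Z/11Z. Any three points of it lie in (11-3)/(5-3) = 4 blocks,
   and no two blocks are disjoint. These finite facts are decided on lists of
   naturals, where computation is not blocked by the locked finset operations,
   and transferred to finite sets. *)
From mathcomp Require Import all_boot.

Set Implicit Arguments.
Unset Strict Implicit.
Unset Printing Implicit Defensive.

Section FamiliesOfSeqs.

Variable T : finType.

Lemma card_set_mem_seq (s : seq T) : uniq s -> #|[set x | x \in s]| = size s.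
Proof. by move=> s_uniq; rewrite cardsE (card_uniqP s_uniq). Qed.

Lemma card_set_mem_seq_filter (s : seq T) (P : pred T) :
  uniq s -> #|[set x in [set x | x \in s] | P x]| = count P s.
Proof.
move=> s_uniq; rewrite -size_filter -card_set_mem_seq ?filter_uniq //.
by apply: eq_card => x; rewrite !inE mem_filter andbC.
Qed.

End FamiliesOfSeqs.

Section OrdSets.

Variable n : nat.

Definition ord_set (l : seq nat) : {set 'I_n} := [set i | val i \in l].

Definition ord_sets (B : seq (seq nat)) : {set {set 'I_n}} :=
  [set A | A \in map ord_set B].

Lemma mem_ord_set (i : 'I_n) l : (i \in ord_set l) = (val i \in l).
Proof. by rewrite inE. Qed.

Lemma val_enum_ord_set l :
  map val (enum (ord_set l)) = [seq i <- iota 0 n | i \in l].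
Proof.
rewrite -val_enum_ord [RHS]filter_map enumT /enum_mem.
by congr (map _ _); apply: eq_filter => i; rewrite /= mem_ord_set.
Qed.

Lemma card_ord_set l : #|ord_set l| = count (mem l) (iota 0 n).
Proof. by rewrite cardE -(size_map val) val_enum_ord_set size_filter. Qed.

Lemma subset_ord_set (S : {set 'I_n}) l :
  (S \subset ord_set l) = all (mem l) (map val (enum S)).
Proof.
rewrite all_map; apply/subsetP/allP => [sub i|sub i Si].
  by rewrite mem_enum => /sub; rewrite mem_ord_set.
by rewrite mem_ord_set; apply: sub; rewrite mem_enum.
Qed.

Lemma ord_setI_neq0 l l' :
  (ord_set l :&: ord_set l' != set0) = has (fun i => (i \in l) && (i \in l')) (iota 0 n).
Proof.
apply/set0Pn/hasP => [[i]|[i]].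
  by rewrite inE !mem_ord_set => meet; exists (val i); rewrite ?mem_iota ?ltn_ord.
rewrite mem_iota add0n => /andP[_ lt_in] meet.
by exists (Ordinal lt_in); rewrite inE !mem_ord_set.
Qed.

Lemma uniq_map_ord_set B :
  uniq [seq [seq i <- iota 0 n | i \in l] | l <- B] -> uniq (map ord_set B).
Proof.
move=> uniq_traces; apply: (@map_uniq _ _ (fun A : {set 'I_n} => map val (enum A))).
by rewrite -map_comp (eq_map val_enum_ord_set).
Qed.

Variable B : seq (seq nat).

Lemma card_ord_sets :
  uniq [seq [seq i <- iota 0 n | i \in l] | l <- B] -> #|ord_sets B| = size B.
Proof. by move/uniq_map_ord_set/card_set_mem_seq; rewrite size_map. Qed.

Lemma uniform_ord_sets k :
  all (fun l => count (mem l) (iota 0 n) == k) B -> uniform k (ord_sets B).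
Proof.
move=> /allP unifB A; rewrite inE => /mapP[l lB ->].
by rewrite card_ord_set; apply/eqP/unifB.
Qed.

Lemma intersecting_ord_sets :
  all (fun l => all (fun l' => has (fun i => (i \in l) && (i \in l')) (iota 0 n)) B) B ->
  intersecting (ord_sets B).
Proof.
move=> /allP meetB A A'; rewrite !inE => /mapP[l lB ->] /mapP[l' l'B ->].
by rewrite ord_setI_neq0; apply: (allP (meetB l lB)).
Qed.

Lemma subset_regular_ord_sets s c :
  uniq [seq [seq i <- iota 0 n | i \in l] | l <- B] ->
  (forall t, uniq t -> size t = s -> all (gtn n) t ->
     count (fun l => all (mem l) t) B = c) ->
  subset_regular s (ord_sets B).
Proof.
move=> /uniq_map_ord_set uniqB countB; exists c => S cardS.
rewrite card_set_mem_seq_filter // count_map.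
under eq_count do rewrite /= subset_ord_set.
apply: countB; first by rewrite map_inj_uniq ?enum_uniq //; apply: val_inj.
  by rewrite size_map -cardE.
by apply/allP => _ /mapP[i _ ->]; apply: ltn_ord.
Qed.

End OrdSets.

Definition base_blocks : seq (seq nat) :=
  [:: [:: 0; 1; 2; 3; 5]; [:: 0; 1; 2; 6; 9]; [:: 0; 1; 2; 7; 8];
      [:: 0; 1; 3; 4; 7]; [:: 0; 1; 3; 6; 8]; [:: 0; 1; 5; 7; 9]].

Definition steiner_blocks : seq (seq nat) :=
  [seq [seq (x + i) %% 11 | x <- b] | b <- base_blocks, i <- iota 0 11].

Lemma steiner_blocks_3_regular t :
  uniq t -> size t = 3 -> all (gtn 11) t ->
  count (fun l => all (mem l) t) steiner_blocks = 4.
Proof.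
have check : all (fun a => all (fun b => all (fun c =>
    uniq [:: a; b; c] ==> (count (fun l => all (mem l) [:: a; b; c]) steiner_blocks == 4))
    (iota 0 11)) (iota 0 11)) (iota 0 11) by vm_compute.
case: t => [|a [|b [|c [|]]]] // t_uniq _ /and4P[lt_a lt_b lt_c _].
have in_iota x : 11 > x -> x \in iota 0 11 by rewrite mem_iota.
move/allP/(_ a (in_iota a lt_a))/allP/(_ b (in_iota b lt_b)): check.
by move/allP/(_ c (in_iota c lt_c)); rewrite t_uniq => /eqP.
Qed.

Theorem mainTheorem12 :
  exists F : {set {set 'I_11}},
    [/\ subset_regular 3 F, uniform 5 F, intersecting F,
        #|F| = 66 &
        #|F| * (1 * 'C(1, 0) + 'C(6, 5)) = 'C(11, 5) * 'C(1, 0)].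
Proof.
have blocks_uniq :
  uniq [seq [seq i <- iota 0 11 | i \in l] | l <- steiner_blocks] by vm_compute.
have card_steiner : #|ord_sets 11 steiner_blocks| = 66 by rewrite card_ord_sets.
exists (ord_sets 11 steiner_blocks); split.
- exact: subset_regular_ord_sets blocks_uniq steiner_blocks_3_regular.
- by apply: uniform_ord_sets; vm_compute.
- by apply: intersecting_ord_sets; vm_compute.
- exact: card_steiner.
- by rewrite card_steiner.
Qed.
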